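(* Let $S=\{a,b,c,d,u,v,w,x\}$ be a set of letters and let $R_1=\{uav^{-1},wbv^{-1},udx^{-1},wcx^{-1}\}$, $R_2=\{bvw^{-1},cxw^{-1},avu^{-1},dxu^{-1}\}$, $R_3=\{vbw^{-1},xcw^{-1},uxd^{-1},uva^{-1}\}$, $R_4=\{dxu^{-1},avu^{-1},vwb^{-1},xwc^{-1}\}$, $R_5=\{vua^{-1},vwb^{-1},xwc^{-1},xud^{-1}\}$. For each $i\in\{1,2,3,4,5\}$, let $G_i$ be the group defined by $\langle S\mid R_i\rangle$ (identifying $S$ with its image in $G_i$). Then $\langle S\mid R_i\rangle$ is a restricted triangular presentation of $G_i$, and $S$ satisfies all of conditions (1)–(5) except condition $(i)$, which fails.
   Context: A presentation $\langle S\mid R\rangle$ of a group $G$ (with $S$ identified with a finite generating subset of $G$) is a restricted triangular presentation if: $S\cap S^{-1}=\emptyset$; $R=\{a\cdot b\cdot c^{-1}\mid a,b,c\in S,\ abc^{-1}=e\text{ in }G\}$ and $\langle S\mid R\rangle$ presents $G$; there are no $a,b,c\in S$ with $abc=e$ in $G$; and for $a,b,c\in S$, $abc\in S$ implies $ab\in S$ and $bc\in S$. Conditions (1)–(5) on $S$ (all equalities in $G$, all variables ranging over $S$): (1) If $ua=wb\in S$ and $ud=wc\in S$ with $u\neq w$, $a\neq d$, then there is $k\in S$ with $w=uk$ or $ua=udk$. (2) If $bv=cx\in S$ and $av=dx\in S$ with $v\neq x$, $a\neq b$, then there is $k\in S$ with $v=kx$ or $av=kbv$. (3) If $ux\in S$,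 $uv\in S$, $vb=xc\in S$ with $v\neq x$, then there is $k\in S$ with $k=uvb$ or $v=xk$. (4) If $vw\in S$, $xw\in S$, $dx=av\in S$ with $v\neq x$, then there is $k\in S$ with $k=avw$ or $x=kv$. (5) If $wv,wx,uv,ux\in S$ with $v\neq x$, $u\neq w$, then there is $k\in S$ with $w=ku$ or $x=vk$. *)

(* Groups given by presentations <S | R> are
   modelled by their word problem: words over S ⊔ S^{-1} modulo the smallest
   congruence containing the free cancellations and the relators. *)
From Stdlib Require Import List.
Import ListNotations.
Set Implicit Arguments.

Section Presentation.
Variable X : Type.

(* a generator or its formal inverse: (s, false) = s, (s, true) = s^{-1} *)
Definition gen := (X * bool)%type.
Definition word := list gen.
Definition ltr (s : X) : gen := (s, false).
Definition inv (s : X) : gen := (s, true).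

Inductive geq (R : list word) : word -> word -> Prop :=
| geq_refl w : geq R w w
| geq_sym w1 w2 : geq R w1 w2 -> geq R w2 w1
| geq_trans w1 w2 w3 : geq R w1 w2 -> geq R w2 w3 -> geq R w1 w3
| geq_ctx p q w1 w2 : geq R w1 w2 -> geq R (p ++ w1 ++ q) (p ++ w2 ++ q)
| geq_free s e : geq R [(s, e); (s, negb e)] []
| geq_rel r : In r R -> geq R r [].

Definition eqG (R : list word) (l1 l2 : list X) : Prop :=
  geq R (map ltr l1) (map ltr l2).

Definition inS (R : list word) (l : list X) : Prop :=
  exists s : X, eqG R l [s].

(* <S | R> is a restricted triangular presentation of the group it defines
   (S being all of X, identified with its image in G). *)
Definition restricted_triangular (R : list word) : Prop :=
  (* S is identified with its image: distinct letters stay distinct in G *)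
  (forall s t : X, eqG R [s] [t] -> s = t) /\
  (forall s t : X, ~ geq R [ltr s] [inv t]) /\
  (forall r, In r R -> exists a b c : X, r = [ltr a; ltr b; inv c]) /\
  (forall a b c : X, geq R [ltr a; ltr b; inv c] [] -> In [ltr a; ltr b; inv c] R) /\
  (forall a b c : X, ~ eqG R [a; b; c] []) /\
  (forall a b c : X, inS R [a; b; c] -> inS R [a; b] /\ inS R [b; c]).

Definition cond1 (R : list word) : Prop :=
  forall u w a b c d : X,
    eqG R [u; a] [w; b] -> inS R [u; a] ->
    eqG R [u; d] [w; c] -> inS R [u; d] ->
    u <> w -> a <> d ->
    exists k : X, eqG R [w] [u; k] \/ eqG R [u; a] [u; d; k].

Definition cond2 (R : list word) : Prop :=
  forall a b c d v x : X,
    eqG R [b; v] [c; x] -> inS R [b; v] ->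
    eqG R [a; v] [d; x] -> inS R [a; v] ->
    v <> x -> a <> b ->
    exists k : X, eqG R [v] [k; x] \/ eqG R [a; v] [k; b; v].

Definition cond3 (R : list word) : Prop :=
  forall u v x b c : X,
    inS R [u; x] -> inS R [u; v] ->
    eqG R [v; b] [x; c] -> inS R [v; b] ->
    v <> x ->
    exists k : X, eqG R [k] [u; v; b] \/ eqG R [v] [x; k].

Definition cond4 (R : list word) : Prop :=
  forall v w x d a : X,
    inS R [v; w] -> inS R [x; w] ->
    eqG R [d; x] [a; v] -> inS R [d; x] ->
    v <> x ->
    exists k : X, eqG R [k] [a; v; w] \/ eqG R [x] [k; v].

Definition cond5 (R : list word) : Prop :=
  forall u v w x : X,
    inS R [w; v] -> inS R [w; x] -> inS R [u; v] -> inS R [u; x] ->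
    v <> x -> u <> w ->
    exists k : X, eqG R [w] [k; u] \/ eqG R [x] [v; k].

Definition cond (n : nat) (R : list word) : Prop :=
  match n with
  | 1 => cond1 R | 2 => cond2 R | 3 => cond3 R | 4 => cond4 R | 5 => cond5 R
  | _ => True
  end.

End Presentation.

Inductive letter := La | Lb | Lc | Ld | Lu | Lv | Lw | Lx.

Definition rel3 (p q r : letter) : word letter := [ltr p; ltr q; inv r].

Definition R1 : list (word letter) :=
  [rel3 Lu La Lv; rel3 Lw Lb Lv; rel3 Lu Ld Lx; rel3 Lw Lc Lx].
Definition R2 : list (word letter) :=
  [rel3 Lb Lv Lw; rel3 Lc Lx Lw; rel3 La Lv Lu; rel3 Ld Lx Lu].
Definition R3 : list (word letter) :=
  [rel3 Lv Lb Lw; rel3 Lx Lc Lw; rel3 Lu Lx Ld; rel3 Lu Lv La].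
Definition R4 : list (word letter) :=
  [rel3 Ld Lx Lu; rel3 La Lv Lu; rel3 Lv Lw Lb; rel3 Lx Lw Lc].
Definition R5 : list (word letter) :=
  [rel3 Lv Lu La; rel3 Lv Lw Lb; rel3 Lx Lw Lc; rel3 Lx Lu Ld].

Definition Rs (i : nat) : list (word letter) :=
  match i with
  | 1 => R1 | 2 => R2 | 3 => R3 | 4 => R4 | _ => R5
  end.

(* In each G_i every relator expresses one generator in terms of
   the others, and four Tietze eliminations show that G_i is free on four of
   the eight letters (e.g. in G_1: a = u^-1 v, b = w^-1 v, d = u^-1 x,
   c = w^-1 x, so G_1 is free on u, v, w, x).  Hence the word problem of G_i
   is solved by substituting for the eliminated letters and freely reducing.
   Since the alphabet is finite, every clause of "restricted triangular" and
   of the conditions (1)-(5) quantifies over finitely many letters, so each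
   becomes a decidable boolean property which is evaluated by computation. *)

From Stdlib Require Import List Bool Lia.
Import ListNotations.
Set Implicit Arguments.

Section Words.
Variable X : Type.

Definition flip (g : gen X) : gen X := (fst g, negb (snd g)).
Definition invw (w : word X) : word X := rev (map flip w).

Lemma flip_flip (g : gen X) : flip (flip g) = g.
Proof. destruct g as [s e]; unfold flip; simpl; rewrite negb_involutive; reflexivity. Qed.

End Words.
Arguments flip {X} g.

Section Congruence.
Variables (X : Type) (R : list (word X)).

Lemma geq_app (w1 w2 w3 w4 : word X) :
  geq R w1 w2 -> geq R w3 w4 -> geq R (w1 ++ w3) (w2 ++ w4).
Proof.
  intros H12 H34. apply geq_trans with (w2 ++ w3).
  - exact (geq_ctx [] w3 H12).
  - pose proof (geq_ctx w2 [] H34) as H. rewrite !app_nil_r in H. exact H.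
Qed.

Lemma geq_cancel_right (w : word X) (s : X) (e : bool) :
  geq R (w ++ [(s, e); (s, negb e)]) w.
Proof.
  pose proof (geq_app (geq_refl R w) (geq_free R s e)) as H.
  rewrite app_nil_r in H. exact H.
Qed.

Lemma geq_mul_invw (w : word X) : geq R (w ++ invw w) [].
Proof.
  induction w as [|g w IH]; simpl.
  - apply geq_refl.
  - unfold invw in *; simpl.
    apply geq_trans with ([g] ++ [] ++ [flip g]).
    + replace (g :: w ++ rev (map flip w) ++ [flip g])
        with ([g] ++ (w ++ rev (map flip w)) ++ [flip g])
        by (simpl; rewrite app_assoc; reflexivity).
      apply geq_ctx; exact IH.
    + destruct g as [s e]. apply geq_free.
Qed.

Lemma geq_invw (s : X) (w : word X) : geq R [ltr s] w -> geq R [inv s] (invw w).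
Proof.
  intro Hs. apply geq_trans with ([inv s] ++ (w ++ invw w)).
  - apply geq_sym. pose proof (geq_app (geq_refl R [inv s]) (geq_mul_invw w)) as H.
    rewrite app_nil_r in H. exact H.
  - apply geq_trans with (([inv s] ++ [ltr s]) ++ invw w).
    + rewrite <- app_assoc. apply (geq_app (geq_refl R [inv s])).
      apply (geq_app (geq_sym Hs) (geq_refl R (invw w))).
    + exact (geq_app (geq_free R s true) (geq_refl R (invw w))).
Qed.

Lemma relator_pq {p q r : X} :
  In [ltr p; ltr q; inv r] R -> geq R [ltr p; ltr q] [ltr r].
Proof.
  intro Hr. apply geq_trans with ([ltr p; ltr q] ++ [inv r; ltr r]).
  - apply geq_sym, (geq_cancel_right [ltr p; ltr q] r true).
  - exact (geq_app (w1 := [ltr p; ltr q; inv r]) (geq_rel R _ Hr) (geq_refl R [ltr r])).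
Qed.

Lemma relator_q {p q r : X} :
  In [ltr p; ltr q; inv r] R -> geq R [ltr q] [inv p; ltr r].
Proof.
  intro Hr. apply geq_trans with ([inv p; ltr p] ++ [ltr q]).
  - apply geq_sym. exact (geq_app (geq_free R p true) (geq_refl R [ltr q])).
  - exact (geq_app (w1 := [inv p]) (geq_refl R _) (relator_pq Hr)).
Qed.

Lemma relator_p {p q r : X} :
  In [ltr p; ltr q; inv r] R -> geq R [ltr p] [ltr r; inv q].
Proof.
  intro Hr. apply geq_trans with ([ltr p] ++ [ltr q; inv q]).
  - apply geq_sym, (geq_cancel_right [ltr p] q false).
  - exact (geq_app (w1 := [ltr p; ltr q]) (relator_pq Hr) (geq_refl R [inv q])).
Qed.

End Congruence.

Section FreeReduction.
Variable X : Type.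
Variable X_eq_dec : forall s t : X, {s = t} + {s <> t}.

Definition gen_eq_dec (g h : gen X) : {g = h} + {g <> h}.
Proof. decide equality; first [apply X_eq_dec | apply bool_dec]. Defined.
Arguments gen_eq_dec : simpl never.

Definition word_eq_dec : forall w1 w2 : word X, {w1 = w2} + {w1 <> w2} :=
  list_eq_dec gen_eq_dec.

Definition act (g : gen X) (z : word X) : word X :=
  match z with
  | h :: t => if gen_eq_dec h (flip g) then t else g :: z
  | [] => [g]
  end.
Definition actw (w z : word X) : word X := fold_right act z w.
Definition free_reduce (w : word X) : word X := actw w [].

Fixpoint reduced (w : word X) : Prop :=
  match w with
  | g :: t => (match t with h :: _ => h <> flip g | [] => True end) /\ reduced t
  | [] => True
  end.

Lemma act_reduced (g : gen X) (z : word X) : reduced z -> reduced (act g z).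
Proof.
  destruct z as [|h t]; simpl; intro Hz; [tauto|].
  destruct (gen_eq_dec h (flip g)); simpl; tauto.
Qed.

Lemma actw_reduced (w z : word X) : reduced z -> reduced (actw w z).
Proof. induction w; simpl; auto using act_reduced. Qed.

Lemma act_flip (g : gen X) (z : word X) : reduced z -> act g (act (flip g) z) = z.
Proof.
  destruct z as [|h t]; simpl; intro Hz.
  - destruct (gen_eq_dec (flip g) (flip g)); [reflexivity | congruence].
  - rewrite flip_flip. destruct (gen_eq_dec h g) as [->|Hne].
    + destruct t as [|h' t]; simpl; [reflexivity|].
      destruct Hz as [Hh' _]. destruct (gen_eq_dec h' (flip g)); congruence.
    + simpl. destruct (gen_eq_dec (flip g) (flip g)); congruence.
Qed.

Lemma flip_act (g : gen X) (z : word X) : reduced z -> act (flip g) (act g z) = z.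
Proof. intro Hz. rewrite <- (flip_flip g) at 2. apply act_flip, Hz. Qed.

Lemma actw_app (w1 w2 z : word X) : actw (w1 ++ w2) z = actw w1 (actw w2 z).
Proof. apply fold_right_app. Qed.

Lemma actw_free_reduce (w z : word X) :
  reduced z -> actw w z = actw (free_reduce w) z.
Proof.
  unfold free_reduce. induction w as [|g w IH]; simpl; intro Hz; [reflexivity|].
  rewrite IH by exact Hz.
  destruct (actw w []) as [|h y] eqn:E; simpl; [reflexivity|].
  destruct (gen_eq_dec h (flip g)) as [->|]; simpl; [|reflexivity].
  rewrite act_flip; [reflexivity|]. apply actw_reduced, Hz.
Qed.

Lemma actw_invw_l (w z : word X) : reduced z -> actw w (actw (invw w) z) = z.
Proof.
  revert z; induction w as [|g w IH]; intros z Hz; simpl; [reflexivity|].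
  unfold invw in *; simpl. rewrite actw_app; simpl.
  rewrite IH by (apply act_reduced, Hz). apply act_flip, Hz.
Qed.

Lemma actw_invw_r (w z : word X) : reduced z -> actw (invw w) (actw w z) = z.
Proof.
  revert z; induction w as [|g w IH]; intros z Hz; simpl; [reflexivity|].
  unfold invw in *; simpl. rewrite actw_app; simpl.
  rewrite flip_act by (apply actw_reduced, Hz). apply IH, Hz.
Qed.

Lemma geq_free_reduce (R : list (word X)) (w : word X) : geq R w (free_reduce w).
Proof.
  unfold free_reduce. induction w as [|g w IH]; simpl; [apply geq_refl|].
  apply geq_trans with (g :: actw w []).
  - exact (geq_app (w1 := [g]) (geq_refl R [g]) IH).
  - destruct (actw w []) as [|h y]; simpl; [apply geq_refl|].
    destruct (gen_eq_dec h (flip g)) as [->|]; [|apply geq_refl].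
    destruct g as [s e]. exact (geq_ctx [] y (geq_free R s e)).
Qed.

End FreeReduction.

Section Elimination.
Variable X : Type.
Variable X_eq_dec : forall s t : X, {s = t} + {s <> t}.
Variable R : list (word X).
Variable sub : X -> word X.

Definition subst_gen (g : gen X) : word X :=
  if snd g then invw (sub (fst g)) else sub (fst g).
Definition subst_word (w : word X) : word X := flat_map subst_gen w.
Definition elim_nf (w : word X) : word X := free_reduce X_eq_dec (subst_word w).

Lemma subst_word_app (w1 w2 : word X) :
  subst_word (w1 ++ w2) = subst_word w1 ++ subst_word w2.
Proof. apply flat_map_app. Qed.

(* Soundness: if the substitution kills every relator, it induces an action
   of <S | R> on the reduced words, so equal words have equal normal forms. *)
Hypothesis relators_killed : forall r, In r R -> elim_nf r = [].

Lemma geq_actw_subst (w1 w2 : word X) : geq R w1 w2 ->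
  forall z, reduced z -> actw X_eq_dec (subst_word w1) z = actw X_eq_dec (subst_word w2) z.
Proof.
  induction 1 as [w|w1 w2 _ IH|w1 w2 w3 _ IH12 _ IH23|p q w1 w2 _ IH|s e|r Hr];
    intros z Hz.
  - reflexivity.
  - symmetry; apply IH, Hz.
  - rewrite IH12, IH23 by exact Hz; reflexivity.
  - rewrite !subst_word_app, !actw_app. f_equal. apply IH, actw_reduced, Hz.
  - unfold subst_word; simpl. rewrite app_nil_r, actw_app.
    destruct e; unfold subst_gen; simpl.
    + apply actw_invw_r, Hz.
    + apply actw_invw_l, Hz.
  - rewrite actw_free_reduce by exact Hz.
    change (free_reduce X_eq_dec (subst_word r)) with (elim_nf r).
    rewrite relators_killed by exact Hr. reflexivity.
Qed.

Hypothesis sub_valid : forall s, geq R [ltr s] (sub s).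

Lemma geq_subst_word (w : word X) : geq R w (subst_word w).
Proof.
  induction w as [|[s e] w IH]; simpl; [apply geq_refl|].
  apply (geq_app (w1 := [(s, e)])); [|exact IH].
  destruct e; unfold subst_gen; simpl.
  - apply geq_invw, sub_valid.
  - apply sub_valid.
Qed.

Lemma geq_elim_nf (w : word X) : geq R w (elim_nf w).
Proof.
  eapply geq_trans; [apply geq_subst_word | apply geq_free_reduce].
Qed.

Theorem geq_iff_elim_nf (w1 w2 : word X) : geq R w1 w2 <-> elim_nf w1 = elim_nf w2.
Proof.
  split; intro H.
  - apply geq_actw_subst; [exact H | exact I].
  - eapply geq_trans; [apply geq_elim_nf|]. rewrite H. apply geq_sym, geq_elim_nf.
Qed.

End Elimination.

(* Lazy boolean connectives, so that evaluation only explores the relevant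
   branches. *)
Notation implB p q := (if p then q else true) (only parsing).
Notation orB p q := (if p then true else q) (only parsing).
Notation andB p q := (if p then q else false) (only parsing).

Lemma impl_reflect (P Q : Prop) (p q : bool) :
  (P <-> p = true) -> (Q <-> q = true) -> ((P -> Q) <-> implB p q = true).
Proof. destruct p, q; intuition congruence. Qed.

Lemma or_reflect (P Q : Prop) (p q : bool) :
  (P <-> p = true) -> (Q <-> q = true) -> (P \/ Q <-> orB p q = true).
Proof. destruct p, q; intuition congruence. Qed.

Lemma and_reflect (P Q : Prop) (p q : bool) :
  (P <-> p = true) -> (Q <-> q = true) -> (P /\ Q <-> andB p q = true).
Proof. destruct p, q; intuition congruence. Qed.

Lemma not_reflect (P : Prop) (p : bool) : (P <-> p = true) -> (~ P <-> negb p = true).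
Proof. destruct p; simpl; intuition discriminate. Qed.

Section Decision.
Variable X : Type.
Variable X_eq_dec : forall s t : X, {s = t} + {s <> t}.
Variable enum : list X.
Hypothesis enum_complete : forall s, In s enum.
Variable R : list (word X).
Variable geqb : word X -> word X -> bool.
Hypothesis geqbP : forall w1 w2, geq R w1 w2 <-> geqb w1 w2 = true.

Definition X_eqb (s t : X) : bool := if X_eq_dec s t then true else false.
Definition word_eqb (w1 w2 : word X) : bool :=
  if word_eq_dec X_eq_dec w1 w2 then true else false.

Definition allX (f : X -> bool) : bool := forallb f enum.
Definition exX (f : X -> bool) : bool := existsb f enum.

Definition eqGb (l1 l2 : list X) : bool := geqb (map (@ltr X) l1) (map (@ltr X) l2).
Definition inSb (l : list X) : bool := exX (fun s => eqGb l [s]).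
Definition is_relatorb (w : word X) : bool := existsb (word_eqb w) R.

Definition triangle_shapeb (r : word X) : bool :=
  match r with
  | [(_, false); (_, false); (_, true)] => true
  | _ => false
  end.

Lemma eq_reflect (s t : X) : s = t <-> X_eqb s t = true.
Proof. unfold X_eqb; destruct (X_eq_dec s t); intuition congruence. Qed.

Lemma word_eqb_reflect (w1 w2 : word X) : w1 = w2 <-> word_eqb w1 w2 = true.
Proof. unfold word_eqb; destruct (word_eq_dec X_eq_dec w1 w2); intuition congruence. Qed.

Lemma forall_reflect (P : X -> Prop) (f : X -> bool) :
  (forall s, P s <-> f s = true) -> ((forall s, P s) <-> allX f = true).
Proof.
  intro HP; unfold allX; rewrite forallb_forall; split; intros H s.
  - intros _; apply HP, H.
  - apply HP, H, enum_complete.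
Qed.

Lemma exists_reflect (P : X -> Prop) (f : X -> bool) :
  (forall s, P s <-> f s = true) -> ((exists s, P s) <-> exX f = true).
Proof.
  intro HP; unfold exX; rewrite existsb_exists; split.
  - intros [s Hs]; exists s; split; [apply enum_complete | apply HP, Hs].
  - intros [s [_ Hs]]; exists s; apply HP, Hs.
Qed.

Lemma eqG_reflect (l1 l2 : list X) : eqG R l1 l2 <-> eqGb l1 l2 = true.
Proof. apply geqbP. Qed.

Lemma inS_reflect (l : list X) : inS R l <-> inSb l = true.
Proof. apply exists_reflect; intro s; apply eqG_reflect. Qed.

Lemma is_relator_reflect (w : word X) : In w R <-> is_relatorb w = true.
Proof.
  unfold is_relatorb; rewrite existsb_exists; split.
  - intro Hw; exists w; split; [exact Hw | apply word_eqb_reflect; reflexivity].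
  - intros [r [Hr Hwr]]; apply word_eqb_reflect in Hwr; subst; exact Hr.
Qed.

Lemma triangle_shape_reflect :
  (forall r, In r R -> exists a b c : X, r = [ltr a; ltr b; inv c]) <->
  forallb triangle_shapeb R = true.
Proof.
  rewrite forallb_forall; split; intros H r Hr; specialize (H r Hr).
  - destruct H as [a [b [c ->]]]; reflexivity.
  - destruct r as [|[a [|]] [|[b [|]] [|[c [|]] [|]]]]; try discriminate.
    exists a, b, c; reflexivity.
Qed.

Ltac reflect_prop :=
  repeat first
    [ apply eqG_reflect | apply inS_reflect | apply geqbP | apply eq_reflect
    | apply is_relator_reflect | apply triangle_shape_reflect
    | apply not_reflect | apply and_reflect | apply or_reflect
    | apply forall_reflect; intro; cbv beta
    | apply exists_reflect; intro; cbv beta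
    | apply impl_reflect ].

Definition restricted_triangularb : bool :=
  andB (allX (fun s => allX (fun t => implB (eqGb [s] [t]) (X_eqb s t))))
 (andB (allX (fun s => allX (fun t => negb (geqb [ltr s] [inv t]))))
 (andB (forallb triangle_shapeb R)
 (andB (allX (fun a => allX (fun b => allX (fun c =>
          implB (geqb [ltr a; ltr b; inv c] []) (is_relatorb [ltr a; ltr b; inv c])))))
 (andB (allX (fun a => allX (fun b => allX (fun c => negb (eqGb [a; b; c] [])))))
       (allX (fun a => allX (fun b => allX (fun c =>
          implB (inSb [a; b; c]) (andB (inSb [a; b]) (inSb [b; c])))))))))).

Lemma restricted_triangular_reflect :
  restricted_triangular R <-> restricted_triangularb = true.
Proof. unfold restricted_triangular, restricted_triangularb; reflect_prop. Qed.

Definition cond1b : bool :=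
  allX (fun u => allX (fun w => allX (fun a => allX (fun b => allX (fun c => allX (fun d =>
    implB (eqGb [u; a] [w; b]) (implB (inSb [u; a])
    (implB (eqGb [u; d] [w; c]) (implB (inSb [u; d])
    (implB (negb (X_eqb u w)) (implB (negb (X_eqb a d))
    (exX (fun k => orB (eqGb [w] [u; k]) (eqGb [u; a] [u; d; k])))))))))))))).

Definition cond2b : bool :=
  allX (fun a => allX (fun b => allX (fun c => allX (fun d => allX (fun v => allX (fun x =>
    implB (eqGb [b; v] [c; x]) (implB (inSb [b; v])
    (implB (eqGb [a; v] [d; x]) (implB (inSb [a; v])
    (implB (negb (X_eqb v x)) (implB (negb (X_eqb a b))
    (exX (fun k => orB (eqGb [v] [k; x]) (eqGb [a; v] [k; b; v])))))))))))))).

Definition cond3b : bool :=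
  allX (fun u => allX (fun v => allX (fun x => allX (fun b => allX (fun c =>
    implB (inSb [u; x]) (implB (inSb [u; v])
    (implB (eqGb [v; b] [x; c]) (implB (inSb [v; b])
    (implB (negb (X_eqb v x))
    (exX (fun k => orB (eqGb [k] [u; v; b]) (eqGb [v] [x; k])))))))))))).

Definition cond4b : bool :=
  allX (fun v => allX (fun w => allX (fun x => allX (fun d => allX (fun a =>
    implB (inSb [v; w]) (implB (inSb [x; w])
    (implB (eqGb [d; x] [a; v]) (implB (inSb [d; x])
    (implB (negb (X_eqb v x))
    (exX (fun k => orB (eqGb [k] [a; v; w]) (eqGb [x] [k; v])))))))))))).

Definition cond5b : bool :=
  allX (fun u => allX (fun v => allX (fun w => allX (fun x =>
    implB (inSb [w; v]) (implB (inSb [w; x]) (implB (inSb [u; v]) (implB (inSb [u; x])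
    (implB (negb (X_eqb v x)) (implB (negb (X_eqb u w))
    (exX (fun k => orB (eqGb [w] [k; u]) (eqGb [x] [v; k])))))))))))).

Definition condb (n : nat) : bool :=
  match n with
  | 1 => cond1b | 2 => cond2b | 3 => cond3b | 4 => cond4b | 5 => cond5b
  | _ => true
  end.

Lemma cond_reflect (n : nat) : cond n R <-> condb n = true.
Proof.
  destruct n as [|[|[|[|[|[|n]]]]]]; simpl; try tauto;
    [ unfold cond1, cond1b | unfold cond2, cond2b | unfold cond3, cond3b
    | unfold cond4, cond4b | unfold cond5, cond5b ]; reflect_prop.
Qed.

End Decision.

Definition letter_eq_dec : forall s t : letter, {s = t} + {s <> t}.
Proof. decide equality. Defined.

Definition letters : list letter := [La; Lb; Lc; Ld; Lu; Lv; Lw; Lx].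

Lemma letters_complete (s : letter) : In s letters.
Proof. destruct s; simpl; tauto. Qed.

(* The Tietze eliminations: each G_i is free on the letters fixed by sub_i.
   G_1 on u v w x, G_2 on u v w x, G_3 on u v w x, G_4 on d v w x,
   G_5 on u v w x. *)
Definition sub1 (s : letter) : word letter :=
  match s with
  | La => [inv Lu; ltr Lv] | Lb => [inv Lw; ltr Lv]
  | Lc => [inv Lw; ltr Lx] | Ld => [inv Lu; ltr Lx]
  | s => [ltr s]
  end.
Definition sub2 (s : letter) : word letter :=
  match s with
  | La => [ltr Lu; inv Lv] | Lb => [ltr Lw; inv Lv]
  | Lc => [ltr Lw; inv Lx] | Ld => [ltr Lu; inv Lx]
  | s => [ltr s]
  end.
Definition sub3 (s : letter) : word letter :=
  match s with
  | La => [ltr Lu; ltr Lv] | Lb => [inv Lv; ltr Lw]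
  | Lc => [inv Lx; ltr Lw] | Ld => [ltr Lu; ltr Lx]
  | s => [ltr s]
  end.
Definition sub4 (s : letter) : word letter :=
  match s with
  | Lu => [ltr Ld; ltr Lx] | La => [ltr Ld; ltr Lx; inv Lv]
  | Lb => [ltr Lv; ltr Lw] | Lc => [ltr Lx; ltr Lw]
  | s => [ltr s]
  end.
Definition sub5 (s : letter) : word letter :=
  match s with
  | La => [ltr Lv; ltr Lu] | Lb => [ltr Lv; ltr Lw]
  | Lc => [ltr Lx; ltr Lw] | Ld => [ltr Lx; ltr Lu]
  | s => [ltr s]
  end.

Definition elim_sub (i : nat) : letter -> word letter :=
  match i with
  | 1 => sub1 | 2 => sub2 | 3 => sub3 | 4 => sub4 | _ => sub5
  end.

Lemma elim_sub_kills_relators (i : nat) :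
  forall r, In r (Rs i) -> elim_nf letter_eq_dec (elim_sub i) r = [].
Proof.
  intros r Hr; destruct i as [|[|[|[|[|i]]]]]; simpl in Hr;
    repeat destruct Hr as [<-|Hr]; try contradiction; vm_compute; reflexivity.
Qed.

Lemma elim_sub_valid (i : nat) (s : letter) : geq (Rs i) [ltr s] (elim_sub i s).
Proof.
  (* in G_4, a = u v^-1 = (d x) v^-1 *)
  assert (H4u : geq R4 [ltr Lu] [ltr Ld; ltr Lx])
    by (apply geq_sym, relator_pq; simpl; tauto).
  assert (H4a : geq R4 [ltr La] [ltr Ld; ltr Lx; inv Lv]).
  { apply geq_trans with ([ltr Lu] ++ [inv Lv]).
    - apply relator_p with (q := Lv); simpl; tauto.
    - exact (geq_app H4u (geq_refl R4 [inv Lv])). }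
  destruct i as [|[|[|[|[|i]]]]]; destruct s; simpl;
    first [ apply geq_refl | exact H4u | exact H4a
          | apply geq_sym, relator_pq; simpl; tauto
          | apply relator_q with (r := _); simpl; tauto
          | apply relator_p with (q := _); simpl; tauto ].
Qed.

Definition geqb_elim (i : nat) (w1 w2 : word letter) : bool :=
  word_eqb letter_eq_dec (elim_nf letter_eq_dec (elim_sub i) w1)
                         (elim_nf letter_eq_dec (elim_sub i) w2).

Lemma geqb_elim_reflect (i : nat) (w1 w2 : word letter) :
  geq (Rs i) w1 w2 <-> geqb_elim i w1 w2 = true.
Proof.
  unfold geqb_elim; rewrite <- word_eqb_reflect.
  apply geq_iff_elim_nf; [apply elim_sub_kills_relators | apply elim_sub_valid].
Qed.

Theorem mainTheorem7 :
  forall i : nat, 1 <= i <= 5 ->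
    restricted_triangular (Rs i) /\
    ~ cond i (Rs i) /\
    (forall j : nat, 1 <= j <= 5 -> j <> i -> cond j (Rs i)).
Proof.
  intros i Hi.
  pose proof (geqb_elim_reflect i) as Hword.
  pose proof (restricted_triangular_reflect letter_eq_dec letters letters_complete _ Hword)
    as Hrt.
  pose proof (cond_reflect letter_eq_dec letters letters_complete _ Hword) as Hcond.
  split; [|split].
  - apply Hrt. destruct i as [|[|[|[|[|[|i]]]]]]; try lia; vm_compute; reflexivity.
  - rewrite Hcond. destruct i as [|[|[|[|[|[|i]]]]]]; try lia; vm_compute; discriminate.
  - intros j Hj Hji. apply Hcond.
    destruct i as [|[|[|[|[|[|i]]]]]], j as [|[|[|[|[|[|j]]]]]]; try lia;
      vm_compute; reflexivity.
Qed.
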